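(* The $\ket{2}$-controlled qubit $Z$ gate can be emulated by a two-qutrit circuit of qutrit Clifford gates and $R$ gates with $R$-count $3$; that is, there is such a circuit $W$ containing exactly three $R$ gates with $W\ket{c,t}=\ket{c,t}$ for $c\in\{0,1\}$, $t\in\{0,1\}$, and $W\ket{2,t}=(-1)^t\ket{2,t}$ for $t\in\{0,1\}$.
   Context: A qutrit is $\mathbb{C}^3$ with basis $\ket{0},\ket{1},\ket{2}$; $\omega=e^{2\pi i/3}$. Qutrit Clifford gates are those generated (up to global phase) by $S=\mathrm{diag}(1,1,\omega)$, $H=\frac{1}{\sqrt3}\begin{pmatrix}1&1&1\\1&\omega&\bar\omega\\1&\bar\omega&\omega\end{pmatrix}$ and $\mathrm{CX}:\ket{i,j}\mapsto\ket{i,(i+j)\bmod3}$. The qutrit reflection gate is $R=\mathrm{diag}(1,1,-1)$. The $R$-count of a circuit is its number of $R$ gates. The first qutrit is the control (any of $\ket{0},\ket{1},\ket{2}$) and the second is the target, restricted to $\{\ket{0},\ket{1}\}$. *)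

From HB Require Import structures.
From mathcomp Require Import all_boot all_order all_algebra all_field.
Set Implicit Arguments. Unset Strict Implicit. Unset Printing Implicit Defensive.
Import Order.TTheory GRing.Theory Num.Theory.
Local Open Scope ring_scope.

Definition qutrit := 'I_3.
(* computational basis of two qutrits: (control, target) *)
Definition idx2 := (qutrit * qutrit)%type.

(* omega = e^{2 pi i/3} *)
Definition omega : algC := (-1 + 'i * sqrtC 3) / 2.

Definition Sg : 'M[algC]_3 := \matrix_(i, j) (if (i == j) then (if (i : nat) == 2%N then omega else 1) else 0).
Definition Hg : 'M[algC]_3 := \matrix_(i, j) (omega ^+ ((i : nat) * j) / sqrtC 3).
Definition Rg : 'M[algC]_3 := \matrix_(i, j) (if (i == j) then (if (i : nat) == 2%N then -1 else 1) else 0).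

(* two-qutrit operators as functions (row index, column index) *)
Definition op2 := idx2 -> idx2 -> algC.
Definition op_id : op2 := fun x y => (x == y)%:R.
Definition op_mul (A B : op2) : op2 := fun x y => \sum_(z : idx2) A x z * B z y.

Definition on_q (q : bool) (U : 'M[algC]_3) : op2 := fun x y =>
  if ~~ q then U x.1 y.1 * (x.2 == y.2)%:R else U x.2 y.2 * (x.1 == y.1)%:R.

(* CX with control qutrit q and target the other: |i,j> |-> |i, i+j mod 3> *)
Definition cx (q : bool) : op2 := fun x y =>
  if ~~ q then ((x.1 == y.1) && ((x.2 : nat) == (y.1 + y.2) %% 3)%N)%:R
  else ((x.2 == y.2) && ((x.1 : nat) == (y.2 + y.1) %% 3)%N)%:R.

(* gates: qubit index false = first (control) qutrit, true = second *)
Inductive gate := GS of bool | GH of bool | GCX of bool | GR of bool.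

Definition gate_op (g : gate) : op2 :=
  match g with
  | GS q => on_q q Sg
  | GH q => on_q q Hg
  | GCX q => cx q
  | GR q => on_q q Rg
  end.

Definition is_R (g : gate) : bool := if g is GR _ then true else false.

(* circuit: list of gates, the head is applied first *)
Fixpoint circ_op (gs : seq gate) : op2 :=
  match gs with
  | [::] => op_id
  | g :: gs' => op_mul (circ_op gs') (gate_op g)
  end.

Definition R_count (gs : seq gate) : nat := count is_R gs.

Definition ket (x : idx2) : idx2 -> algC := fun y => (y == x)%:R.
Definition apply_op (A : op2) (v : idx2 -> algC) : idx2 -> algC :=
  fun x => \sum_(y : idx2) A x y * v y.

From mathcomp Require Import all_boot all_order all_algebra all_field.
Import Order.TTheory GRing.Theory Num.Theory.
Local Open Scope ring_scope.

(* The circuit W below uses only CX and R gates, whose matrices are signed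
   permutation matrices, so W acts on basis states by a permutation and a sign.
   The block CX(c->t) CX(t->c) CX(c->t) sends |a,b> to |2a+b,-b>; applied twice
   around an R on the target it gives |a,b> -> |a+b,b> with sign [b=1].  The
   remaining R, CX(t->c), R, CX(t->c) see a+b and a+2b on the control and end in
   |a+3b,b> = |a,b>.  The total sign [b=1] + [a+b=2] + [a+2b=2] is, for b in
   {0,1}, odd exactly when a = 2 and b = 1. *)

Definition add3 (a b : qutrit) : qutrit :=
  Ordinal (ltn_pmod (a + b)%N (isT : (0 < 3)%N)).

Definition signed_perm_op (p : idx2 -> idx2) (s : idx2 -> bool) : op2 :=
  fun y x => (y == p x)%:R * (-1) ^+ s x.

Lemma apply_op_ket (A : op2) (x y : idx2) : apply_op A (ket x) y = A y x.
Proof.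
rewrite /apply_op (bigD1 x) //= big1 ?addr0 => [|z /negbTE zx]; last first.
  by rewrite /ket zx mulr0.
by rewrite /ket eqxx mulr1.
Qed.

Lemma op_mul_signed_perm (A : op2) p s y x :
  op_mul A (signed_perm_op p s) y x = A y (p x) * (-1) ^+ s x.
Proof.
rewrite /op_mul (bigD1 (p x)) //= big1 ?addr0 => [|z /negbTE zpx].
  by rewrite /signed_perm_op eqxx mul1r.
by rewrite /signed_perm_op zpx mul0r mulr0.
Qed.

Definition gate_perm (g : gate) (x : idx2) : idx2 :=
  match g with
  | GCX false => (x.1, add3 x.1 x.2)
  | GCX true => (add3 x.2 x.1, x.2)
  | _ => x
  end.

Definition gate_sign (g : gate) (x : idx2) : bool :=
  match g with
  | GR false => (x.1 : nat) == 2%N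
  | GR true => (x.2 : nat) == 2%N
  | _ => false
  end.

Definition signed_perm_gate (g : gate) : bool :=
  match g with GCX _ | GR _ => true | _ => false end.

Lemma cxE q y x :
  cx q y x = signed_perm_op (gate_perm (GCX q)) (gate_sign (GCX q)) y x.
Proof.
case: y => y1 y2; case: q; rewrite /cx /signed_perm_op /= xpair_eqE expr0 mulr1 //.
by rewrite andbC.
Qed.

Lemma RgE (i j : qutrit) : Rg i j = (i == j)%:R * (-1) ^+ ((j : nat) == 2%N).
Proof.
rewrite mxE; have [->|_] := eqVneq i j; last by rewrite mul0r.
by case: (_ == 2%N); rewrite ?expr1 ?expr0 ?mul1r.
Qed.

Lemma on_q_RgE q y x :
  on_q q Rg y x = signed_perm_op (gate_perm (GR q)) (gate_sign (GR q)) y x.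
Proof.
case: y x => y1 y2 [x1 x2]; case: q; rewrite /on_q /signed_perm_op /= !RgE.
  by rewrite xpair_eqE mulrAC -natrM mulnb andbC.
by rewrite xpair_eqE mulrAC -natrM mulnb.
Qed.

Lemma gate_opE g y x : signed_perm_gate g ->
  gate_op g y x = signed_perm_op (gate_perm g) (gate_sign g) y x.
Proof. by case: g => // q _ /=; rewrite ?cxE ?on_q_RgE. Qed.

Fixpoint circ_perm (gs : seq gate) (x : idx2) : idx2 :=
  if gs is g :: gs' then circ_perm gs' (gate_perm g x) else x.

Fixpoint circ_sign (gs : seq gate) (x : idx2) : bool :=
  if gs is g :: gs' then gate_sign g x (+) circ_sign gs' (gate_perm g x) else false.

Lemma circ_opE gs y x : all signed_perm_gate gs ->
  circ_op gs y x = signed_perm_op (circ_perm gs) (circ_sign gs) y x.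
Proof.
elim: gs y x => [|g gs IH] y x /=; first by rewrite /signed_perm_op mulr1.
case/andP=> sg sgs.
have -> : op_mul (circ_op gs) (gate_op g) y x =
          op_mul (circ_op gs) (signed_perm_op (gate_perm g) (gate_sign g)) y x.
  by apply: eq_bigr => z _; rewrite gate_opE.
rewrite op_mul_signed_perm IH // /signed_perm_op signr_addb.
by rewrite mulrAC -mulrA.
Qed.

Definition W : seq gate :=
  [:: GCX false; GCX true; GCX false; GR true; GCX false; GCX true;
      GCX false; GR false; GCX true; GR false; GCX true].

Lemma W_perm x : circ_perm W x = x.
Proof. by case: x => -[[|[|[|?]]] ?] // [[|[|[|?]]] ?] //; apply/eqP. Qed.

Lemma W_sign (c t : qutrit) : (t < 2)%N ->
  circ_sign W (c, t) = ((c : nat) == 2%N) && odd t.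
Proof. by case: c => -[|[|[|?]]] ? //; case: t => -[|[|?]] ?. Qed.

Theorem mainTheorem5 :
  exists (gs : seq gate) (z : algC),
    `|z| = 1 /\ R_count gs = 3%N /\
    forall (c t : qutrit), (t < 2)%N ->
      forall y : idx2,
        z * apply_op (circ_op gs) (ket (c, t)) y =
        (if (c : nat) == 2%N then (-1) ^+ t else 1) * ket (c, t) y.
Proof.
exists W, 1; split; first exact: normr1.
split=> // c t t_lt2 y.
rewrite mul1r apply_op_ket circ_opE // /signed_perm_op W_perm W_sign // mulrC.
by case: (_ == 2%N); rewrite /= ?signr_odd ?expr0.
Qed.
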